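(* Let $w,v\in\Sigma^+$ be primitive words. The following are equivalent: (1) $w$ and $v$ are co-primitive; (2) there exist $n_0,m_0\in\mathbb{N}$ such that $\mathsf{Facs}(w^{n_0})\cap\mathsf{Facs}(v^{m_0})=\mathsf{Facs}(w^{n})\cap\mathsf{Facs}(v^{m})$ for all $n>n_0$ and all $m>m_0$; (3) there exists $r\in\mathbb{N}$ such that $r\ge\max\{|x| : x\in\mathsf{Facs}(w^n)\cap\mathsf{Facs}(v^m)\}$ for all $n,m\in\mathbb{N}$.
   Context: $\mathsf{Facs}(w)$ is the set of all factors of $w$. A word $w\in\Sigma^+$ is primitive if there is no $z\in\Sigma^*$ and $k>1$ with $w=z^k$. Two words $w,v\in\Sigma^+$ are conjugate if there exist $x,y\in\Sigma^*$ with $w=xy$ and $v=yx$. Two words are co-primitive if both are primitive and they are not conjugate. *)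

From mathcomp Require Import all_boot.
Set Implicit Arguments. Unset Strict Implicit. Unset Printing Implicit Defensive.

Definition wpow (Sigma : eqType) (w : seq Sigma) (k : nat) : seq Sigma :=
  flatten (nseq k w).

Definition Facs (Sigma : eqType) (w : seq Sigma) : pred (seq Sigma) :=
  fun x => infix x w.

Definition primitive (Sigma : eqType) (w : seq Sigma) : Prop :=
  w != [::] /\ ~ (exists (z : seq Sigma) (k : nat), 1 < k /\ w = wpow z k).

Definition conjugate (Sigma : eqType) (w v : seq Sigma) : Prop :=
  exists x y : seq Sigma, w = x ++ y /\ v = y ++ x.

Definition co_primitive (Sigma : eqType) (w v : seq Sigma) : Prop :=
  primitive w /\ primitive v /\ ~ conjugate w v.

From mathcomp Require Import all_boot.
From mathcomp Require Import zify.
Set Implicit Arguments. Unset Strict Implicit.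

(* A factor of some power w^n is exactly a word x that "reads w cyclically":
   for some offset a, x_i = w_((a+i) mod |w|) for all i < |x|.  Consequently
   such an x is a factor of every power w^k with k > |x|.

   If x reads both w and v cyclically and |x| >= |w| + |v|, the weak
   Fine-Wilf theorem shows that both cyclic readings have period
   gcd(|w|,|v|); primitivity forces this gcd to equal both |w| and |v|, so
   the two readings coincide everywhere and v is a rotation of w, i.e. w and
   v are conjugate.  Hence common factors of powers of co-primitive words
   have length < |w| + |v|, which gives (1) => (2) and (1) => (3).
   Conversely, if w = xy and v = yx then w^n is a factor of v^(n+1), so
   common factors are arbitrarily long, refuting (2) and (3). *)

Section Words.
(* d is only the default letter returned by nth out of range; statements
   not mentioning cyc hold whatever d is, and are stated outside the section
   with d taken from a non-empty word. *)
Variables (Sigma : eqType) (d : Sigma).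

Lemma wpowS (w : seq Sigma) n : wpow w n.+1 = w ++ wpow w n.
Proof. by []. Qed.

Lemma size_wpow (w : seq Sigma) n : size (wpow w n) = n * size w.
Proof. by elim: n => [|n IH] //; rewrite wpowS size_cat IH mulSn. Qed.

Lemma wpowD (w : seq Sigma) m n : wpow w (m + n) = wpow w m ++ wpow w n.
Proof. by elim: m => [|m IH] //; rewrite addSn !wpowS IH catA. Qed.

Lemma nth_wpow (w : seq Sigma) n i : i < n * size w ->
  nth d (wpow w n) i = nth d w (i %% size w).
Proof.
elim: n i => [|n IH] i; first by rewrite mul0n.
rewrite mulSn wpowS nth_cat => Hi.
case: ifP => Hiw; first by rewrite modn_small.
have Hle : size w <= i by rewrite leqNgt Hiw.
rewrite -[in RHS](subnK Hle) modnDr; apply: IH; lia.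
Qed.

Lemma infix_wpow_mono (w x : seq Sigma) m n : m <= n ->
  infix x (wpow w m) -> infix x (wpow w n).
Proof. by move=> Hmn H; rewrite -(subnKC Hmn) wpowD; apply: infix_catr. Qed.

Lemma wpow_conj (x y : seq Sigma) n :
  wpow (y ++ x) n.+1 = y ++ wpow (x ++ y) n ++ x.
Proof.
elim: n => [|n IH]; first by rewrite /wpow /= !cats0.
by rewrite wpowS IH wpowS -!catA.
Qed.

Lemma infix_of_nth (s x : seq Sigma) a : a + size x <= size s ->
  (forall i, i < size x -> nth d x i = nth d s (a + i)) -> infix x s.
Proof.
move=> Hs Hx.
have -> : x = take (size x) (drop a s).
  apply: (@eq_from_nth _ d); first by rewrite size_takel // size_drop; lia.
  by move=> i Hi; rewrite nth_take // nth_drop Hx.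
exact: infix_trans (infix_take _ _) (infix_drop _ _).
Qed.

(* The infinite periodic word w w w ..., as a function of the position. *)
Definition cyc (w : seq Sigma) (i : nat) : Sigma := nth d w (i %% size w).

Definition reads_cyclically (w x : seq Sigma) : Prop :=
  exists a, forall i, i < size x -> nth d x i = cyc w (a + i).

Lemma infix_wpow_reads (w x : seq Sigma) n :
  infix x (wpow w n) -> reads_cyclically w x.
Proof.
move/infixP=> [s [s' E]]; exists (size s) => i Hi.
have Hs := size_wpow w n; rewrite E !size_cat in Hs.
rewrite /cyc -(@nth_wpow w n); last lia.
by rewrite E nth_cat ifN ?addKn ?nth_cat ?Hi //; lia.
Qed.

Lemma reads_infix_wpow (w x : seq Sigma) k : 0 < size w ->
  reads_cyclically w x -> size x < k -> infix x (wpow w k).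
Proof.
move=> Hw [a Ha] Hk; have Ham := ltn_pmod a Hw.
apply: (@infix_of_nth _ _ (a %% size w)); first by rewrite size_wpow; nia.
by move=> i Hi; rewrite Ha // nth_wpow ?modnDml //; nia.
Qed.

Definition period (g : nat) (h : nat -> Sigma) : Prop :=
  forall i, h (i + g) = h i.

Lemma period_mul h g : period g h -> forall k i, h (i + k * g) = h i.
Proof.
move=> Hg; elim=> [|k IH] i; first by rewrite addn0.
by rewrite mulSn addnA IH Hg.
Qed.

Lemma period_mod h g : period g h -> forall i, h i = h (i %% g).
Proof. by move=> Hg i; rewrite {1}(divn_eq i g) addnC period_mul. Qed.

Lemma period_cyc w : period (size w) (cyc w).
Proof. by move=> i; rewrite /cyc modnDr. Qed.

Lemma period_cyc_shift w c : period (size w) (fun i => cyc w (c + i)).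
Proof. by move=> i; rewrite addnA period_cyc. Qed.

Lemma period_unshift (F : nat -> Sigma) p g a : 0 < p -> period p F ->
  period g (fun i => F (a + i)) -> period g F.
Proof.
move=> Hp HF Hg j.
have back m : F m = F (a + (m + a * (p - 1))).
  by rewrite -(period_mul HF a m); congr F; nia.
by rewrite (back j) (back (j + g)) -(Hg (j + a * (p - 1))); congr F; nia.
Qed.

Lemma fine_wilf (h k : nat -> Sigma) p q L : 0 < p -> p + q <= L ->
  period p h -> period q k -> (forall i, i < L -> h i = k i) ->
  period (gcdn p q) h.
Proof.
move=> Hp HL Hh Hk Heq.
have Hqh : period q h.
  move=> i; have Hi := ltn_pmod i Hp.
  rewrite (period_mod Hh (i + q)) -modnDml -(period_mod Hh).
  by rewrite (period_mod Hh i) !Heq ?Hk //; lia.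
move=> i; case: (Bezoutl q Hp) => c _ /dvdnP [e He].
by rewrite -(period_mul Hqh c) -addnA He period_mul.
Qed.

Lemma wpow_of_period (w : seq Sigma) g : 0 < g -> g %| size w ->
  period g (cyc w) -> w = wpow (take g w) (size w %/ g).
Proof.
move=> Hg Hdv Hper.
case: (posnP (size w)) => [/size0nil -> | Hw]; first by rewrite div0n.
have Hgw := dvdn_leq Hw Hdv.
have Hsz : size (take g w) = g by rewrite size_takel.
apply: (@eq_from_nth _ d); first by rewrite size_wpow Hsz divnK.
move=> i Hi; rewrite nth_wpow; last by rewrite Hsz divnK.
have Hig := ltn_pmod i Hg.
have := period_mod Hper i; rewrite /cyc.
by rewrite Hsz nth_take // (modn_small Hi) (modn_small (leq_trans Hig Hgw)).
Qed.

Lemma primitive_period (w : seq Sigma) g : primitive w -> 0 < g ->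
  g %| size w -> period g (cyc w) -> g = size w.
Proof.
move=> [Hne Hprim] Hg Hdv Hper.
have Hw : 0 < size w by case: (w) Hne.
have Hgw := dvdn_leq Hw Hdv.
case: (ltngtP g (size w)) => Hlt //; last lia.
exfalso; apply: Hprim; exists (take g w), (size w %/ g); split.
  by rewrite ltn_divRL // mul1n.
exact: wpow_of_period.
Qed.

Lemma common_window_size (w v : seq Sigma) a b L :
  primitive w -> primitive v -> size w + size v <= L ->
  (forall i, i < L -> cyc w (a + i) = cyc v (b + i)) -> size w = size v.
Proof.
move=> Pw Pv HL Heq.
have Hw : 0 < size w by case: Pw; case: (w).
have Hv : 0 < size v by case: Pv; case: (v).
have Gw : period (gcdn (size w) (size v)) (fun i => cyc w (a + i)).
  exact: fine_wilf Hw HL (period_cyc_shift w a) (period_cyc_shift v b) Heq.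
have Gv : period (gcdn (size v) (size w)) (fun i => cyc v (b + i)).
  apply: (fine_wilf (L := L) Hv _ (period_cyc_shift v b) (period_cyc_shift w a)); first by rewrite addnC.
  by move=> i Hi; rewrite Heq.
have Ew : gcdn (size w) (size v) = size w.
  apply: primitive_period; rewrite ?gcdn_gt0 ?Hw ?dvdn_gcdl //.
  exact: period_unshift Hw (period_cyc w) Gw.
have Ev : gcdn (size v) (size w) = size v.
  apply: primitive_period; rewrite ?gcdn_gt0 ?Hv ?dvdn_gcdl //.
  exact: period_unshift Hv (period_cyc v) Gv.
by rewrite -Ev gcdnC Ew.
Qed.

Lemma cyc_shift_rot (w v : seq Sigma) s : 0 < size w -> size v = size w ->
  s < size w -> (forall j, cyc v j = cyc w (s + j)) -> v = rot s w.
Proof.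
move=> Hw Hvw Hs Hcyc; apply: (@eq_from_nth _ d); first by rewrite size_rot.
move=> j Hj; have := Hcyc j; rewrite /cyc Hvw modn_small -?Hvw // => ->.
rewrite Hvw /rot nth_cat size_drop; case: ifP => Hjs.
  by rewrite nth_drop modn_small //; lia.
rewrite nth_take; last lia.
have -> : s + j = (j - (size w - s)) + size w by lia.
by rewrite modnDr modn_small //; lia.
Qed.

Lemma common_window_conjugate (w v : seq Sigma) a b L :
  primitive w -> primitive v -> size w + size v <= L ->
  (forall i, i < L -> cyc w (a + i) = cyc v (b + i)) -> conjugate w v.
Proof.
move=> Pw Pv HL Heq.
have Hw : 0 < size w by case: Pw; case: (w).
have Hvw := esym (common_window_size Pw Pv HL Heq).
have Hall i : cyc w (a + i) = cyc v (b + i).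
  have := period_mod (period_cyc_shift w a) i.
  have := period_mod (period_cyc_shift v b) i.
  rewrite -Hvw /= => -> ->; apply: Heq; have := ltn_pmod i Hw; lia.
set s := (a + (size w - b %% size w)) %% size w.
exists (take s w), (drop s w); split; first by rewrite cat_take_drop.
rewrite -[drop _ _ ++ _]/(rot s w); apply: cyc_shift_rot; rewrite ?ltn_pmod //.
move=> j; have Hbm := ltn_pmod b Hw.
have -> : cyc v j = cyc v (b + (j + (size w - b %% size w))).
  rewrite /cyc Hvw; congr nth.
  have -> : b + (j + (size w - b %% size w)) = (b %/ size w).+1 * size w + j.
    by have := divn_eq b (size w); nia.
  by rewrite modnMDl.
by rewrite -Hall /cyc modnDml; congr nth; congr modn; lia.
Qed.

Lemma conjugate_common_factor (w v : seq Sigma) n : conjugate w v ->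
  infix (wpow w n) (wpow v n.+1).
Proof. by move=> [x [y [-> ->]]]; rewrite wpow_conj; apply: infix_infix. Qed.

End Words.

Lemma infix_wpow_extend (Sigma : eqType) (w x : seq Sigma) n k : 0 < size w ->
  infix x (wpow w n) -> size x < k -> infix x (wpow w k).
Proof.
move=> Hw; have d : Sigma by case: (w) Hw.
by move=> /(infix_wpow_reads d); apply: reads_infix_wpow.
Qed.

Lemma common_factor_bound (Sigma : eqType) (w v x : seq Sigma) n m :
  co_primitive w v ->
  infix x (wpow w n) -> infix x (wpow v m) -> size x < size w + size v.
Proof.
move=> [Pw [Pv Nc]]; have d : Sigma by case: Pw; case: (w).
move=> /(infix_wpow_reads d) [a Ha] /(infix_wpow_reads d) [b Hb].
rewrite ltnNge; apply/negP => HL; apply: Nc.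
by apply: (common_window_conjugate (d := d) (a := a) (b := b) Pw Pv HL) => i Hi; rewrite -Ha // -Hb.
Qed.


Theorem lemma4p11 (Sigma : finType) (w v : seq Sigma) :
  primitive w -> primitive v ->
  (co_primitive w v <->
   (exists n0 m0 : nat, forall n m : nat, n0 < n -> m0 < m ->
      forall x : seq Sigma,
        (Facs (wpow w n0) x && Facs (wpow v m0) x) =
        (Facs (wpow w n) x && Facs (wpow v m) x)))
  /\
  (co_primitive w v <->
   (exists r : nat, forall n m : nat, forall x : seq Sigma,
      Facs (wpow w n) x -> Facs (wpow v m) x -> size x <= r)).
Proof.
move=> Pw Pv.
have Hw : 0 < size w by case: Pw; case: (w).
have Hv : 0 < size v by case: Pv; case: (v).
have CP : ~ conjugate w v -> co_primitive w v by [].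
(* w^N is a common factor of w^N and v^(N+1), longer than w^n for n < N. *)
have long_factor N : conjugate w v -> Facs (wpow w N) (wpow w N) && Facs (wpow v N.+1) (wpow w N).
  by move=> Hc; rewrite /Facs infix_refl conjugate_common_factor.
rewrite /Facs; split; split.
- move=> Hcp; exists (size w + size v), (size w + size v) => n m Hn Hm x.
  apply/andP/andP => -[H1 H2]; split.
  + exact: infix_wpow_mono (ltnW Hn) H1.
  + exact: infix_wpow_mono (ltnW Hm) H2.
  + exact: infix_wpow_extend Hw H1 (common_factor_bound Hcp H1 H2).
  + exact: infix_wpow_extend Hv H2 (common_factor_bound Hcp H1 H2).
- move=> [n0 [m0 Hstable]]; apply: CP => Hc.
  have := Hstable (n0 + m0).+1 (n0 + m0).+2 ltac:(lia) ltac:(lia) (wpow w (n0 + m0).+1).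
  rewrite (long_factor _ Hc) => /andP [/size_infix + _].
  by rewrite !size_wpow leq_pmul2r //; lia.
- move=> Hcp; exists (size w + size v) => n m x H1 H2.
  exact: ltnW (common_factor_bound Hcp H1 H2).
- move=> [r Hbound]; apply: CP => Hc.
  have /andP [H1 H2] := long_factor r.+1 Hc.
  have := Hbound _ _ _ H1 H2; rewrite size_wpow => /(leq_trans (leq_pmulr r.+1 Hw)); lia.
Qed.
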